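(* Let $X$ be a batch of $S(H)$ and $(v,w)$ an edge of $H$ with $e(v,w)$ occurring in $X$; let $(v,y)$ be the edge that cyclicly precedes $(v,w)$. If $e(v,w)$ is immediately preceded in $X$ by $e(v,y)$, then the segment of $X$ occupied by $e(v,w)$ is exactly one phrase of the LZ77 parsing of $X$; if $e(v,w)$ is immediately preceded by $s(v)$, it is the union of exactly two phrases; in every other case (including when $e(v,w)$ is the first string of $X$), it is the union of at least two phrases.
   Context: $H$ is a directed graph without loops in which no vertex has outdegree exactly 1. For each vertex $v$ introduce three symbols $v$, $v'$, $\$_v$; all these symbols are pairwise distinct (over all vertices). For a vertex $v$ with outdegree $d=d(v)\ge 1$, let $w_0,\dots,w_{d-1}$ be its out-neighbors in a fixed cyclic order (indices mod $d$); the edge $(v,w_{i-1})$ cyclicly precedes $(v,w_i)$. Define $e(v,w_i)=(v'w_{i-1})^4v'w_i$ for $0\le i<d$ and $s(v)=v^4(v')^5\$_v$. $S(H)$ is the set of all strings $s(v)$ ($v$ a vertex) and $e(v,w)$ ($(v,w)$ an edge). A batch is a sequence of distinct elements of $S(H)$, identified with their concatenation; a schedule is a partition of $S(H)$ into batches. LZ77 parsing of a string $z$: $z=z_1z_2\cdots z_t$ where, once $z_1,\dots,z_{i-1}$ are determined and the remaining suffix is nonempty, $z_i$ is the longest nonempty prefix $u$ of the remaining suffix such that $u^-$ ($u$ with its last symbol deleted) has an occurrence in $z$ starting at a position strictly smaller than the starting position of $u$ (the empty string always qualifies). The $z_i$ are the phrases; $|\mathcal C(z)|=t$ is the number of phrases.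 *)

From mathcomp Require Import all_boot.
Set Implicit Arguments. Unset Strict Implicit. Unset Printing Implicit Defensive.

(* A symbol is a pair (v, tag): tag 0 = the symbol v, tag 1 = v', tag 2 = $_v.
   All these symbols are pairwise distinct over all vertices. *)
Definition sym (V : finType) := (V * nat)%type.
Definition sbase  {V : finType} (v : V) : sym V := (v, 0).
Definition sprime {V : finType} (v : V) : sym V := (v, 1).
Definition sdollar {V : finType} (v : V) : sym V := (v, 2).

(* ---------- the graph H ----------
   Vertices: a finite type V.  [adj v] lists the out-neighbours w_0,...,w_{d-1}
   of v in their fixed cyclic order; the edges are the (v,w) with w \in adj v. *)
Definition graph_ok (V : finType) (adj : V -> seq V) : Prop :=
  (forall v, uniq (adj v)) /\
  (forall v, v \notin adj v) /\
  (forall v, size (adj v) != 1).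

(* cyclic predecessor: for w = w_i, returns w_{i-1} (indices mod d) *)
Definition cpred (V : finType) (adj : V -> seq V) (v w : V) : V :=
  let d := size (adj v) in
  nth v (adj v) ((index w (adj v) + d).-1 %% d).

(* e(v,w_i) = (v' w_{i-1})^4 v' w_i *)
Definition e_str (V : finType) (adj : V -> seq V) (v w : V) : seq (sym V) :=
  flatten (nseq 4 [:: sprime v; sbase (cpred adj v w)]) ++ [:: sprime v; sbase w].

Definition s_str (V : finType) (v : V) : seq (sym V) :=
  nseq 4 (sbase v) ++ nseq 5 (sprime v) ++ [:: sdollar v].

Definition inSH (V : finType) (adj : V -> seq V) (s : seq (sym V)) : Prop :=
  (exists v, s = s_str v) \/ (exists v w, w \in adj v /\ s = e_str adj v w).

(* A batch: a sequence of distinct elements of S(H) (identified with its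
   concatenation [flatten X]). *)
Definition is_batch (V : finType) (adj : V -> seq V) (X : seq (seq (sym V))) : Prop :=
  uniq X /\ (forall s, s \in X -> inSH adj s).

Section LZ.
Variable T : eqType.

(* [l] qualifies as the length of the phrase starting at position [i] of [z]:
   u = z[i, i+l) and u^- (length l-1) has an occurrence in z starting at some
   position j < i; the empty string (l = 1) always qualifies. *)
Definition lz_qualifies (z : seq T) (i l : nat) : bool :=
  (l == 1) ||
  has (fun j => (j + l.-1 <= size z) &&
                (take l.-1 (drop j z) == take l.-1 (drop i z))) (iota 0 i).

Definition lz_len (z : seq T) (i : nat) : nat :=
  \max_(1 <= l < (size z - i).+1 | lz_qualifies z i l) l.

Fixpoint lz_starts_from (z : seq T) (i fuel : nat) : seq nat :=
  if fuel is n.+1 then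
    if i < size z then i :: lz_starts_from z (i + lz_len z i) n else [::]
  else [::].

Definition lz_starts (z : seq T) : seq nat := lz_starts_from z 0 (size z).

Definition lz_phrases (z : seq T) : seq (seq T) :=
  [seq take (lz_len z i) (drop i z) | i <- lz_starts z].
Definition lz_count (z : seq T) : nat := size (lz_phrases z).

Definition lz_boundary (z : seq T) (p : nat) : bool :=
  (p \in lz_starts z) || (p == size z).

Definition lz_union_of (z : seq T) (a b k : nat) : Prop :=
  a <= b /\ lz_boundary z a /\ lz_boundary z b /\
  count (fun p => a <= p < b) (lz_starts z) = k.
End LZ.

(* In e(v,w) = (v'y)^4 v'w, with y the cyclic predecessor of w, the digram v'y
   occurs in a batch only inside e(v,w) itself and at offset 8 of e(v,y): in any
   other e(v,u) it forces cpred u = y, i.e. u = w, and the strings of a batch are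
   distinct.  Consequently no phrase starting in e(v,w) crosses its end, and since
   the dollar of s(x) occurs nowhere else, neither does a phrase starting in an
   s-block; so the parse restricted to e(v,w) is determined locally.  If e(v,y)
   comes right before, the shift by 2 copies the whole block as one phrase.
   Otherwise the first phrase has length at most 4 (and at least 2 after s(v),
   whose last v' can be reused); by 2-periodicity a phrase starting at offset 2,
   3 or 4 runs exactly to the end of the block; and after a first phrase of
   length 1 the second one either reaches the end (when the symbol before the
   block is y) or stops by offset 4. *)

From mathcomp Require Import all_boot zify.

Set Implicit Arguments.
Unset Strict Implicit.
Unset Printing Implicit Defensive.

Section LempelZiv.
Variable T : eqType.
Implicit Types (z : seq T) (P Q : seq nat).

Lemma lz_qualifies_copy (x0 : T) z i j l :
  j < i -> j + l.-1 <= size z -> i + l.-1 <= size z ->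
  (forall k, k < l.-1 -> nth x0 z (j + k) = nth x0 z (i + k)) ->
  lz_qualifies z i l.
Proof.
move=> lt_ji le_jz le_iz eq_ji; apply/orP; right; apply/hasP; exists j.
  by rewrite mem_iota.
rewrite le_jz; apply/eqP/(@eq_from_nth _ x0) => [|k].
  by rewrite !size_takel // size_drop; lia.
rewrite size_takel ?size_drop; last by lia.
by move=> lt_kl; rewrite !nth_take // !nth_drop eq_ji.
Qed.

Lemma lz_qualifies_source (x0 : T) z i l : 1 < l -> lz_qualifies z i l ->
  exists j, [/\ j < i, j + l.-1 <= size z &
    forall k, k < l.-1 -> nth x0 z (j + k) = nth x0 z (i + k)].
Proof.
move=> lt1l /orP[/eqP l1 | /hasP[j]]; first by rewrite l1 in lt1l.
rewrite mem_iota => /andP[_ lt_ji] /andP[le_jz /eqP eq_take].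
exists j; split=> // k lt_kl.
by rewrite -!nth_drop -(nth_take x0 lt_kl) eq_take nth_take.
Qed.

Lemma lz_qualifies_le z i l l' :
  lz_qualifies z i l -> 0 < l' <= l -> lz_qualifies z i l'.
Proof.
case/orP=> [/eqP -> le_l'1 | /hasP[j j_i /andP[le_jz /eqP eq_take]] le_l'l].
  by apply/orP; left; lia.
case: (eqVneq l' 1) => [-> // | _]; apply/orP; right; apply/hasP; exists j => //.
have le_l'l1 : l'.-1 <= l.-1 by lia.
apply/andP; split; first by lia.
by rewrite -(minn_idPl le_l'l1) !take_min eq_take.
Qed.

Lemma lz_len_le z i M : ~~ lz_qualifies z i M.+1 -> lz_len z i <= M.
Proof.
move=> not_qM; apply: (big_ind (fun l => l <= M)) => // [l l' ? ?|l q_l].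
  by rewrite geq_max; apply/andP.
rewrite leqNgt; apply: contra not_qM => lt_Ml.
by apply: lz_qualifies_le q_l _; lia.
Qed.

Lemma lz_len_ge z i l :
  0 < l <= size z - i -> lz_qualifies z i l -> l <= lz_len z i.
Proof.
move=> l_range q_l; apply: (leq_bigmax_seq (F := id)) => //.
by rewrite mem_index_iota; lia.
Qed.

Lemma lz_len_gt0 z i : i < size z -> 0 < lz_len z i.
Proof. by move=> lt_iz; apply: (@lz_len_ge _ _ 1) => //; lia. Qed.

Definition lz_from z i := lz_starts_from z i (size z - i).

Lemma lz_starts_from_fuel z i f g : size z - i <= f -> size z - i <= g ->
  lz_starts_from z i f = lz_starts_from z i g.
Proof.
elim: f g i => [|f IH] [|g] i /= le_f le_g //; try by case: ltnP => //; lia.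
case: ifP => // lt_iz; have := lz_len_gt0 lt_iz => pos_len; congr (_ :: _).
by apply: IH; lia.
Qed.

Lemma lz_startsE z : lz_starts z = lz_from z 0.
Proof. by rewrite /lz_from subn0. Qed.

Lemma lz_from_cons z i : i < size z -> lz_from z i = i :: lz_from z (i + lz_len z i).
Proof.
move=> lt_iz; have pos_len := lz_len_gt0 lt_iz.
rewrite /lz_from (_ : size z - i = (size z - i).-1.+1) /=; last by lia.
by rewrite lt_iz; congr (_ :: _); apply: lz_starts_from_fuel; lia.
Qed.

Lemma lz_from_ge z i p : p \in lz_from z i -> i <= p.
Proof.
rewrite /lz_from; move: (size z - i) => f; elim: f i => [|f IH] i //=.
case: ifP => // _; rewrite inE => /orP[/eqP -> // | /IH]; lia.
Qed.

Lemma lz_from_cat z p B : p <= B <= size z ->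
  (forall q, p <= q < B -> q + lz_len z q <= B) ->
  exists2 Q, lz_from z p = Q ++ lz_from z B & all (fun q => q < B) Q.
Proof.
have [n le_Bpn] : exists n, B - p <= n by exists (B - p).
elim: n p le_Bpn => [|n IH] p le_Bpn p_B closed.
  by exists [::]; rewrite // (_ : p = B) //; lia.
case: (eqVneq p B) => [-> | ne_pB]; first by exists [::].
have lt_pz : p < size z by lia.
have [|||Q EQ Q_lt] := IH (p + lz_len z p); first by have := lz_len_gt0 lt_pz; lia.
- by have := closed p; lia.
- by move=> q q_B; apply: closed; lia.
exists (p :: Q); first by rewrite lz_from_cons // EQ.
by rewrite /= Q_lt andbT; lia.
Qed.

Lemma lz_len_fresh (x0 : T) z B q :
  (forall j, j < B.-1 -> nth x0 z j != nth x0 z B.-1) -> q < B -> q + lz_len z q <= B.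
Proof.
move=> fresh lt_qB; suff : lz_len z q <= B - q by lia.
apply: lz_len_le; apply/negP => /(lz_qualifies_source x0) [|j [lt_jq _ eq_jq]]; first by lia.
have := fresh (j + (B - q).-1); rewrite eq_jq; last by lia.
by rewrite (_ : q + (B - q).-1 = B.-1) ?eqxx //; lia.
Qed.

Lemma lz_union_of_starts z P Q a b :
  a < b <= size z -> lz_starts z = P ++ a :: Q ++ lz_from z b ->
  all (fun p => p < a) P -> all (fun p => a < p < b) Q ->
  lz_union_of z a b (size Q).+1.
Proof.
move=> a_b Ez P_lt Q_in; split; first by lia.
split; first by rewrite /lz_boundary Ez mem_cat mem_head orbT.
split.
  rewrite /lz_boundary; case: (ltnP b (size z)) => [lt_bz | ge_bz].
    by rewrite Ez lz_from_cons // !(mem_cat, inE) eqxx !orbT.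
  by apply/orP; right; lia.
rewrite Ez count_cat /= count_cat.
rewrite (eq_in_count (a2 := pred0)) ?count_pred0; last by move=> p /(allP P_lt) /=; lia.
rewrite (eq_in_count (s := Q) (a2 := predT)) ?count_predT; last by move=> p /(allP Q_in) /=; lia.
rewrite (eq_in_count (a2 := pred0)) ?count_pred0; last by move=> p /lz_from_ge /=; lia.
by rewrite leqnn /=; lia.
Qed.
End LempelZiv.

Lemma size_flatten_uniform (T : Type) n (X : seq (seq T)) :
  all (fun s => size s == n) X -> size (flatten X) = size X * n.
Proof. by elim: X => //= s X IH /andP[/eqP s_n /IH]; rewrite size_cat s_n mulSn => ->. Qed.

Lemma nth_flatten_uniform (T : Type) (x0 : T) n (X : seq (seq T)) m o :
  all (fun s => size s == n) X -> o < n ->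
  nth x0 (flatten X) (m * n + o) = nth x0 (nth [::] X m) o.
Proof.
elim: X m => [|s X IH] m; first by rewrite !nth_nil.
move=> /= /andP[/eqP s_n all_n] lt_on; rewrite nth_cat s_n.
case: m => [|m]; first by rewrite mul0n add0n lt_on.
by rewrite mulSn -addnA ltnNge leq_addr /= addKn IH.
Qed.

Definition preceded_by (T : eqType) (X : seq (seq T)) n t :=
  (0 < n) && (nth [::] X n.-1 == t).

Lemma preceded_by_catP (T : eqType) (X1 X2 : seq (seq T)) s t :
  reflect (exists X0, X1 = rcons X0 t) (preceded_by (X1 ++ s :: X2) (size X1) t).
Proof.
case/lastP: X1 => [|X0 t'].
  by apply: (iffP andP) => [[] // | [X0 /(congr1 size)]]; rewrite size_rcons.
rewrite /preceded_by size_rcons /= nth_cat size_rcons ltnSn nth_rcons ltnn eqxx.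
by apply: (iffP eqP) => [-> | [X0' /rcons_inj [_ ->]]]; first exists X0.
Qed.

Lemma preceded_by_neq (T : eqType) (X : seq (seq T)) n t t' :
  preceded_by X n t -> t != t' -> ~~ preceded_by X n t'.
Proof. by case/andP=> _ /eqP <- /negbTE ne_t; rewrite /preceded_by ne_t andbF. Qed.

Section CyclicPredecessor.
Variables (V : finType) (adj : V -> seq V) (v : V).
Hypothesis adj_uniq : uniq (adj v).
Local Notation d := (size (adj v)).

Lemma cpred_mem w : w \in adj v -> cpred adj v w \in adj v.
Proof.
by move=> w_v; rewrite /cpred mem_nth // ltn_pmod //; case: (adj v) w_v.
Qed.

Lemma cpredE w : w \in adj v -> cpred adj v w =
  nth v (adj v) (if index w (adj v) == 0 then d.-1 else (index w (adj v)).-1).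
Proof.
rewrite -index_mem /cpred; case: (index w (adj v)) => [|i] lt_id /=.
  by rewrite add0n modn_small // ltn_predL.
by rewrite modnDr modn_small // ltnW.
Qed.

Lemma cpred_inj u w : u \in adj v -> w \in adj v -> cpred adj v u = cpred adj v w -> u = w.
Proof.
move=> u_v w_v; rewrite !cpredE //.
have lt_ud : index u (adj v) < d by rewrite index_mem.
have lt_wd : index w (adj v) < d by rewrite index_mem.
(* [nth_uniq] bounds indices by [size] at the eqType instance; naming it makes
   all occurrences a single atom for [lia]. *)
move/eqP; rewrite nth_uniq //; set n := size (adj v) in lt_ud lt_wd *; try by case: ifP; lia.
move=> eq_pred; rewrite -(nth_index v u_v) -(nth_index v w_v); congr nth.
by move/eqP: eq_pred; do 2 case: ifP; lia.
Qed.

Lemma cpred_neq w : d != 1 -> w \in adj v -> cpred adj v w != w.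
Proof.
move=> d_neq1 w_v; rewrite cpredE //.
have lt_wd : index w (adj v) < d by rewrite index_mem.
rewrite -[X in _ != X](nth_index v w_v) nth_uniq //; set n := size (adj v) in d_neq1 lt_wd *;
  by case: ifP; lia.
Qed.
End CyclicPredecessor.

Section Strings.
Variables (V : finType) (adj : V -> seq V) (x0 : sym V).

Lemma nth_s_str x o : o < 10 ->
  nth x0 (s_str x) o = if o < 4 then sbase x else if o < 9 then sprime x else sdollar x.
Proof. by case: o => [|[|[|[|[|[|[|[|[|[|o]]]]]]]]]]. Qed.

Lemma nth_e_str u t o : o < 10 -> nth x0 (e_str adj u t) o =
  if odd o then sbase (if o == 9 then t else cpred adj u t) else sprime u.
Proof. by case: o => [|[|[|[|[|[|[|[|[|[|o]]]]]]]]]]. Qed.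

Lemma s_str_neq_e_str x u t : s_str x != e_str adj u t.
Proof. by apply/eqP => -[]. Qed.
End Strings.

Section Batch.
Variables (V : finType) (adj : V -> seq V).
Hypothesis adj_uniq : forall v, uniq (adj v).
Hypothesis adj_size : forall v, size (adj v) != 1.
Variable X : seq (seq (sym V)).
Hypothesis X_uniq : uniq X.
Hypothesis X_SH : forall s, s \in X -> inSH adj s.

Local Notation z := (flatten X).

Lemma batch_blocks_size : all (fun s => size s == 10) X.
Proof. by apply/allP => s /X_SH [[x ->] | [u [t [_ ->]]]]. Qed.

Lemma size_batch : size z = size X * 10.
Proof. exact: size_flatten_uniform batch_blocks_size. Qed.

Lemma nth_batch (x0 : sym V) m o :
  o < 10 -> nth x0 z (m * 10 + o) = nth x0 (nth [::] X m) o.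
Proof. exact: nth_flatten_uniform batch_blocks_size. Qed.

Lemma batch_position i : i < size z ->
  exists m o, [/\ i = m * 10 + o, o < 10 & m < size X].
Proof.
rewrite size_batch => lt_iz; exists (i %/ 10), (i %% 10); split.
- exact: divn_eq.
- by rewrite ltn_mod.
- by rewrite ltn_divLR.
Qed.

Lemma inSH_batch_block m : m < size X -> inSH adj (nth [::] X m).
Proof. by move=> lt_mX; apply: X_SH; rewrite mem_nth. Qed.

Lemma batch_block_inj m m' : m < size X -> m' < size X ->
  nth [::] X m = nth [::] X m' -> m = m'.
Proof. by move=> lt_mX lt_m'X /eqP; rewrite nth_uniq // => /eqP. Qed.

Lemma nth_batch_sdollar (x0 : sym V) i x : i < size z -> nth x0 z i = sdollar x ->
  exists m, i = m * 10 + 9 /\ nth [::] X m = s_str x.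
Proof.
case/batch_position=> m [o [-> lt_o10 lt_mX]]; rewrite nth_batch //.
case: (inSH_batch_block lt_mX) => [[x' Xm] | [u [t [_ Xm]]]];
  rewrite Xm ?nth_s_str ?nth_e_str //; last by case: ifP.
by case: ifP => // _; case: ifP => // ge_o9 [<-]; exists m; split => //; lia.
Qed.

Lemma batch_sdollar_fresh (x0 : sym V) n x : n < size X -> nth [::] X n = s_str x ->
  forall j, j < n * 10 + 9 -> nth x0 z j != nth x0 z (n * 10 + 9).
Proof.
move=> lt_nX Xn j lt_j; rewrite nth_batch // Xn nth_s_str //=; apply/eqP => zj.
have [|m [jE Xm]] := nth_batch_sdollar _ zj; first by rewrite size_batch; lia.
have lt_mX : m < size X by lia.
by rewrite -Xn in Xm; have := batch_block_inj lt_mX lt_nX Xm; lia.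
Qed.

Lemma lz_from_block_s n x : n < size X -> nth [::] X n = s_str x ->
  exists2 Q, lz_from z (n * 10) = Q ++ lz_from z (n * 10 + 10) &
             all (fun p => p < n * 10 + 10) Q.
Proof.
move=> lt_nX Xn; apply: lz_from_cat; first by rewrite size_batch; lia.
move=> q /andP[_ lt_q]; apply: (lz_len_fresh (x0 := sdollar x)) => //.
by rewrite addnS /=; exact: (batch_sdollar_fresh (sdollar x) lt_nX Xn).
Qed.

Lemma nth_batch_sprime_cpred (x0 : sym V) v w n1 :
  n1 < size X -> nth [::] X n1 = e_str adj v w -> w \in adj v ->
  forall i, i.+1 < size z -> nth x0 z i = sprime v ->
  nth x0 z i.+1 = sbase (cpred adj v w) ->
  n1 * 10 <= i < n1 * 10 + 10 \/
  exists m, i = m * 10 + 8 /\ nth [::] X m = e_str adj v (cpred adj v w).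
Proof.
move=> lt_n1X Xn1 w_v i lt_iz.
have [m [o [-> lt_o10 lt_mX]]] := batch_position (ltnW lt_iz).
have [-> | lt_o9] : o = 9 \/ o < 9 by lia.
  by rewrite nth_batch //; case: (inSH_batch_block lt_mX) => [[x ->] | [u [t [_ ->]]]].
rewrite -addnS !nth_batch //.
case: (inSH_batch_block lt_mX) => [[x Xm] | [u [t [t_u Xm]]]];
  rewrite Xm ?nth_s_str ?nth_e_str //.
  case: ifP => // ge_o4; rewrite lt_o9 => _.
  by case: ifP => [| _]; [lia | case: ifP].
rewrite /=; case: ifP => // even_o [uv]; subst u => /=.
case: eqP => [o8 [tE] | _ [/(cpred_inj (adj_uniq v) t_u w_v) tw]].
  by right; exists m; split; [lia | rewrite Xm tE].
rewrite tw -Xn1 in Xm; have := batch_block_inj lt_mX lt_n1X Xm.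
by left; lia.
Qed.

Section EBlock.
Variables (v w : V) (n1 : nat).
Hypothesis lt_n1X : n1 < size X.
Hypothesis Xn1 : nth [::] X n1 = e_str adj v w.
Hypothesis w_v : w \in adj v.

Local Notation a := (n1 * 10).
Local Notation b := (n1 * 10 + 10).
Local Notation y := (cpred adj v w).
Local Notation x0 := (sbase v).

Lemma nth_block_e_body k : k <= 8 ->
  nth x0 z (a + k) = if odd k then sbase y else sprime v.
Proof.
move=> le_k8; rewrite nth_batch ?Xn1 ?nth_e_str; try lia.
by have /negbTE -> : k != 9 by lia.
Qed.

Lemma nth_block_e_last : nth x0 z (a + 9) = sbase w.
Proof. by rewrite nth_batch // Xn1. Qed.

Lemma nth_block_e_body_neq_w k : k <= 8 -> nth x0 z (a + k) != sbase w.
Proof.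
move=> le_k8; rewrite nth_block_e_body //; apply/eqP.
have := cpred_neq (adj_uniq v) (adj_size v) w_v.
by case: ifP => _ // /eqP y_w [].
Qed.

Lemma nth_block_e_shift2 j t k : a <= j -> j + 2 * t + k <= a + 8 ->
  nth x0 z (j + k) = nth x0 z (j + 2 * t + k).
Proof.
move=> le_aj le_a8.
rewrite (_ : j + k = a + (j - a + k)); last by lia.
rewrite (_ : j + 2 * t + k = a + (j - a + k + 2 * t)); last by lia.
by rewrite !nth_block_e_body ?[odd (_ + 2 * t)]oddD ?oddM ?addbF //; lia.
Qed.

(* A source of z[q, b) would hold a copy v'y v'y v'w of z[a+4, b) starting before
   a+4: its two v'y digrams, 2 apart, cannot both end e(v,y) blocks, and inside
   the block its w would fall on an offset <= 8. *)
Lemma lz_len_block_e_le q : a <= q <= a + 4 -> lz_len z q <= b - q.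
Proof.
move=> q_range; apply: lz_len_le; apply/negP.
move=> /(lz_qualifies_source x0) [|j [lt_jq _ eq_jq]]; first by lia.
pose j' := j + (a + 4 - q).
have zj' k : k <= 5 -> nth x0 z (j' + k) =
    if k == 5 then sbase w else if odd k then sbase y else sprime v.
  move=> le_k5; rewrite /j' -addnA eq_jq /=; last by lia.
  rewrite (_ : q + _ = a + (4 + k)); last by lia.
  case: eqP => [-> | ne_k5]; first exact: nth_block_e_last.
  by rewrite nth_block_e_body ?oddD //; lia.
have not_w : ~ (a <= j' + 5 <= a + 8).
  move=> j'_range; have := @nth_block_e_body_neq_w (j' + 5 - a).
  by rewrite (_ : a + _ = j' + 5) ?zj' ?eqxx //; lia.
have [|||in_block | [m [j'E _]]] :=
  nth_batch_sprime_cpred (x0 := x0) lt_n1X Xn1 w_v (i := j').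
- by rewrite size_batch; lia.
- by rewrite -[j']addn0 zj'.
- by rewrite -addn1 zj'.
- by apply: not_w; lia.
have [|||in_block | [m' [j'2E _]]] :=
  nth_batch_sprime_cpred (x0 := x0) lt_n1X Xn1 w_v (i := j' + 2).
- by rewrite size_batch; lia.
- by rewrite zj'.
- by rewrite -addnS zj'.
- by apply: not_w; lia.
by lia.
Qed.

(* A source of v'y v'y before the block starts at the end of an e(v,y) block,
   so its second v'y must be the start of the block itself. *)
Lemma lz_len_block_e_not_after_e : ~~ preceded_by X n1 (e_str adj v y) -> lz_len z a <= 4.
Proof.
move=> not_after.
apply: lz_len_le; apply/negP => /(lz_qualifies_source x0) [|j [lt_ja _ eq_ja]] //.
have zj k : k < 4 -> nth x0 z (j + k) = if odd k then sbase y else sprime v.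
  by move=> lt_k4; rewrite eq_ja // nth_block_e_body //; lia.
have [|||in_block | [m [jE Xm]]] :=
  nth_batch_sprime_cpred (x0 := x0) lt_n1X Xn1 w_v (i := j).
- by rewrite size_batch; lia.
- by rewrite -[j]addn0 zj.
- by rewrite -addn1 zj.
- by lia.
have [|||in_block | [m' [j2E _]]] :=
  nth_batch_sprime_cpred (x0 := x0) lt_n1X Xn1 w_v (i := j + 2).
- by rewrite size_batch; lia.
- by rewrite zj.
- by rewrite -addnS zj.
- have n1E : n1 = m.+1 by lia.
  by move: not_after; rewrite /preceded_by n1E /= Xm eqxx.
by lia.
Qed.

(* The v'y in a source of y v'y is either inside the block, and then the source
   starts just before it, or at offset 8 of e(v,y), where it follows cpred y <> y. *)
Lemma lz_qualifies_block_e_second :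
  lz_qualifies z (a + 1) 4 -> 0 < n1 /\ nth x0 z a.-1 = sbase y.
Proof.
move=> /(lz_qualifies_source x0) [|j [lt_ja1 _ eq_ja]] //.
have z_j : nth x0 z j = sbase y.
  by rewrite -[j]addn0 eq_ja // addn0 (nth_block_e_body (k := 1)).
have z_j1 : nth x0 z (j + 1) = sprime v.
  by rewrite eq_ja // -addnA (nth_block_e_body (k := 2)).
have z_j2 : nth x0 z (j + 2) = sbase y.
  by rewrite eq_ja // -addnA (nth_block_e_body (k := 3)).
have [|||in_block | [m [j1E Xm]]] :=
  nth_batch_sprime_cpred (x0 := x0) lt_n1X Xn1 w_v (i := j + 1).
- by rewrite size_batch; lia.
- exact: z_j1.
- by rewrite -addnS.
- have [ja | ja1] : j = a \/ j.+1 = a by lia.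
    by move: z_j; rewrite ja -[a]addn0 nth_block_e_body.
  by rewrite -ja1; split => //; lia.
have := cpred_neq (adj_uniq v) (adj_size v) (cpred_mem w_v).
move: z_j; rewrite (_ : j = m * 10 + 7); last by lia.
by rewrite nth_batch // Xm => -[->]; rewrite eqxx.
Qed.

Lemma lz_len_block_e_tail q : a + 2 <= q <= a + 4 -> lz_len z q = b - q.
Proof.
move=> q_range.
apply/anti_leq/andP; split; first by apply: lz_len_block_e_le; lia.
apply: lz_len_ge; first by rewrite size_batch; lia.
apply: (lz_qualifies_copy (x0 := x0) (j := q - 2)); try by rewrite ?size_batch; lia.
by move=> k lt_k; rewrite (nth_block_e_shift2 (t := 1)); [congr nth | |]; lia.
Qed.

Lemma lz_from_block_e_tail q : a + 2 <= q <= a + 4 -> lz_from z q = q :: lz_from z b.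
Proof.
move=> q_range.
by rewrite lz_from_cons ?lz_len_block_e_tail ?subnKC // ?size_batch; lia.
Qed.

Lemma lz_len_block_e_after_e : preceded_by X n1 (e_str adj v y) -> lz_len z a = 10.
Proof.
case/andP=> n1_gt0 /eqP Xprev.
apply/anti_leq/andP; split.
  by apply: leq_trans (lz_len_block_e_le _) _; [lia | rewrite addKn].
apply: lz_len_ge; first by rewrite size_batch; lia.
apply: (lz_qualifies_copy (x0 := x0) (j := a - 2)); try by rewrite ?size_batch; lia.
have prevE : a - 2 = n1.-1 * 10 + 8 by lia.
move=> /= [|[|k]] lt_k.
- by rewrite (nth_block_e_body (k := 0)) // prevE addn0 nth_batch // Xprev.
- by rewrite (nth_block_e_body (k := 1)) // prevE -addnA nth_batch // Xprev.
rewrite (_ : a - 2 + k.+2 = a + k); last by lia.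
by rewrite (nth_block_e_shift2 (t := 1)); [congr nth | |]; lia.
Qed.

Lemma lz_len_block_e_after_s : preceded_by X n1 (s_str v) -> 2 <= lz_len z a.
Proof.
case/andP=> n1_gt0 /eqP Xprev.
apply: lz_len_ge; first by rewrite size_batch; lia.
apply: (lz_qualifies_copy (x0 := x0) (j := a - 2)); try by rewrite ?size_batch; lia.
move=> k /= lt_k1; rewrite (_ : k = 0) ?addn0; last by lia.
rewrite (_ : a - 2 = n1.-1 * 10 + 8); last by lia.
by rewrite nth_batch // Xprev -[a]addn0 nth_block_e_body.
Qed.

Lemma lz_len_block_e_second : 0 < n1 -> nth x0 z a.-1 = sbase y -> lz_len z (a + 1) = 9.
Proof.
move=> n1_gt0 z_prev.
apply/anti_leq/andP; split; first by apply: leq_trans (lz_len_block_e_le _) _; lia.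
apply: lz_len_ge; first by rewrite size_batch; lia.
apply: (lz_qualifies_copy (x0 := x0) (j := a.-1)); try by rewrite ?size_batch; lia.
move=> /= [|k] lt_k; first by rewrite !addn0 z_prev nth_block_e_body.
rewrite (_ : a.-1 + k.+1 = a + k); last by lia.
by rewrite (nth_block_e_shift2 (t := 1)); [congr nth | |]; lia.
Qed.

Lemma lz_from_block_e_after_e :
  preceded_by X n1 (e_str adj v y) -> lz_from z a = a :: lz_from z b.
Proof.
by move=> after; rewrite lz_from_cons ?lz_len_block_e_after_e // size_batch; lia.
Qed.

Lemma lz_from_block_e_not_after_e : ~~ preceded_by X n1 (e_str adj v y) ->
  exists Q, [/\ lz_from z a = a :: Q ++ lz_from z b, all (fun p => a < p < b) Q,
                0 < size Q & 2 <= lz_len z a -> size Q = 1].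
Proof.
move=> not_after; have le4 := lz_len_block_e_not_after_e not_after.
have lt_az : a < size z by rewrite size_batch; lia.
have lt_a1z : a + 1 < size z by rewrite size_batch; lia.
have len_gt0 := lz_len_gt0 lt_az.
rewrite (lz_from_cons lt_az).
case: (leqP 2 (lz_len z a)) => [ge2 | lt2].
  exists [:: a + lz_len z a]; split; [|by rewrite /= andbT; lia | by [] | by []].
  by rewrite lz_from_block_e_tail //; lia.
have len1 : lz_len z a = 1 by lia.
rewrite len1 (lz_from_cons lt_a1z).
case: (boolP (lz_qualifies z (a + 1) 4)) => [q4 | not_q4].
  have [n1_gt0 z_prev] := lz_qualifies_block_e_second q4.
  exists [:: a + 1]; split; [|by rewrite /= andbT; lia | by [] | by []].
  by rewrite lz_len_block_e_second // (_ : a + 1 + 9 = b) //; lia.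
have len2_le3 := lz_len_le not_q4; have len2_gt0 := lz_len_gt0 lt_a1z.
exists [:: a + 1; a + 1 + lz_len z (a + 1)].
split; [|by rewrite /= andbT; lia | by [] | by []].
by rewrite lz_from_block_e_tail //; lia.
Qed.

Lemma lz_from_block_e :
  exists2 Q, lz_from z a = Q ++ lz_from z b & all (fun p => p < b) Q.
Proof.
case: (boolP (preceded_by X n1 (e_str adj v y))) => [after | not_after].
  by exists [:: a]; rewrite ?lz_from_block_e_after_e // /= andbT; lia.
have [Q [-> Q_in _ _]] := lz_from_block_e_not_after_e not_after.
exists (a :: Q) => //; rewrite /=; apply/andP; split; first by lia.
by apply: sub_all Q_in => p /andP[].
Qed.
End EBlock.

Lemma lz_starts_batch n : n <= size X ->
  exists2 P, lz_starts z = P ++ lz_from z (n * 10) & all (fun p => p < n * 10) P.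
Proof.
elim: n => [|n IH] le_nX; first by exists [::]; rewrite ?lz_startsE.
have [P EP P_lt] := IH (ltnW le_nX).
have [Q EQ Q_lt] : exists2 Q, lz_from z (n * 10) = Q ++ lz_from z (n * 10 + 10) &
                              all (fun p => p < n * 10 + 10) Q.
  case: (inSH_batch_block le_nX) => [[x Xn] | [u [t [t_u Xn]]]].
    exact: lz_from_block_s Xn.
  exact: lz_from_block_e Xn t_u.
exists (P ++ Q); first by rewrite EP EQ catA mulSn addnC.
rewrite all_cat mulSn addnC Q_lt andbT; apply: sub_all P_lt => p; lia.
Qed.

Lemma lz_union_of_block n Q : n < size X ->
  lz_from z (n * 10) = n * 10 :: Q ++ lz_from z (n * 10 + 10) ->
  all (fun p => n * 10 < p < n * 10 + 10) Q ->
  lz_union_of z (n * 10) (n * 10 + 10) (size Q).+1.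
Proof.
move=> lt_nX EQ Q_in; have [P EP P_lt] := lz_starts_batch (ltnW lt_nX).
by apply: lz_union_of_starts P_lt Q_in; [rewrite size_batch; lia | rewrite EP EQ].
Qed.
End Batch.

Theorem lemma7 (V : finType) (adj : V -> seq V) (HG : graph_ok adj)
    (v w : V) (Hvw : w \in adj v) (X1 X2 : seq (seq (sym V))) :
  is_batch adj (X1 ++ e_str adj v w :: X2) ->
  let z := flatten (X1 ++ e_str adj v w :: X2) in
  let a := size (flatten X1) in
  let b := a + size (e_str adj v w) in
  let y := cpred adj v w in
  [/\ (forall X0, X1 = rcons X0 (e_str adj v y) -> lz_union_of z a b 1),
      (forall X0, X1 = rcons X0 (s_str v) -> lz_union_of z a b 2)
    & ((forall X0, X1 <> rcons X0 (e_str adj v y)) ->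
       (forall X0, X1 <> rcons X0 (s_str v)) ->
       exists2 k, 2 <= k & lz_union_of z a b k)].
Proof.
move=> [X_uniq X_SH] z a b y; case: HG => adj_uniq [_ adj_size].
have lt_n1X : size X1 < size (X1 ++ e_str adj v w :: X2).
  by rewrite size_cat /= addnS ltnS leq_addr.
have Xn1 : nth [::] (X1 ++ e_str adj v w :: X2) (size X1) = e_str adj v w.
  by rewrite nth_cat ltnn subnn.
have Ea : a = size X1 * 10.
  by move: (batch_blocks_size X_SH); rewrite all_cat => /andP[/size_flatten_uniform].
rewrite /b Ea; change (size (e_str adj v w)) with 10.
have union Q := lz_union_of_block adj_uniq adj_size X_uniq X_SH (Q := Q) lt_n1X.
have parse := lz_from_block_e_not_after_e adj_uniq adj_size X_uniq X_SH lt_n1X Xn1 Hvw.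
split.
- move=> X0 X1E; apply: (union [::]) => //.
  by apply: (lz_from_block_e_after_e adj_uniq adj_size X_uniq X_SH lt_n1X Xn1 Hvw);
    apply/preceded_by_catP; exists X0.
- move=> X0 X1E; have after_s : preceded_by (X1 ++ e_str adj v w :: X2) (size X1) (s_str v).
    by apply/preceded_by_catP; exists X0.
  have [|Q [EQ Q_in _ size_Q]] := parse.
    exact: preceded_by_neq after_s (s_str_neq_e_str _ _ _ _).
  have := union Q EQ Q_in.
  by rewrite (size_Q (lz_len_block_e_after_s X_uniq X_SH lt_n1X Xn1 Hvw after_s)).
- move=> not_after_e _; have [|Q [EQ Q_in Q_gt0 _]] := parse.
    by apply/preceded_by_catP => -[X0 /not_after_e].
  by exists (size Q).+1; [exact: Q_gt0 | exact: union].
Qed.
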